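(* Let $n$ entities move in $\mathbb{R}^1$ along piecewise-linear trajectories $\sigma:[t_0,t_\tau]\to\mathbb{R}$ whose vertices are all at the common times $t_0<t_1<\dots<t_\tau$. Let $\mathcal{U}(t)=\max_\sigma \sigma(t)$, $\mathcal{L}(t)=\min_\sigma\sigma(t)$ and $\mathcal{I}(t)=(\mathcal{U}(t)+\mathcal{L}(t))/2$. Subdivide each interval $[t_i,t_{i+1}]$ into maximal subintervals (elementary intervals) on which $\mathcal{I}$ is a single linear function. Then the total number of elementary intervals over all of $[t_0,t_\tau]$ is at most $\tau(n+2)$.
   Context: $\mathcal{I}$ is called the ideal trajectory; it is the pointwise midpoint of the highest and lowest entity. *)

From Stdlib Require Import Reals Lra List.
Import ListNotations.
Open Scope R_scope.

(* Upper envelope U(x) = max_{k<n} sigma k x  (meaningful for n >= 1). *)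
Definition upper (n : nat) (sigma : nat -> R -> R) (x : R) : R :=
  fold_right Rmax (sigma 0%nat x) (map (fun k => sigma k x) (seq 0 n)).

Definition lower (n : nat) (sigma : nat -> R -> R) (x : R) : R :=
  fold_right Rmin (sigma 0%nat x) (map (fun k => sigma k x) (seq 0 n)).

Definition ideal (n : nat) (sigma : nat -> R -> R) (x : R) : R :=
  (upper n sigma x + lower n sigma x) / 2.

Definition affine_on (f : R -> R) (a b : R) : Prop :=
  exists alpha beta : R, forall x, a <= x <= b -> f x = alpha * x + beta.

Definition elementary_partition (f : R -> R) (a b : R) (s : list R) : Prop :=
  (2 <= length s)%nat /\
  nth 0 s 0 = a /\
  nth (length s - 1) s 0 = b /\
  (forall j, (j + 1 < length s)%nat -> nth j s 0 < nth (j + 1) s 0) /\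
  (forall j, (j + 1 < length s)%nat -> affine_on f (nth j s 0) (nth (j + 1) s 0)) /\
  (forall j, (1 <= j)%nat -> (j + 1 < length s)%nat ->
     ~ affine_on f (nth (j - 1) s 0) (nth (j + 1) s 0)).

Definition num_pieces (s : list R) : nat := (length s - 1)%nat.

Fixpoint nsum (m : nat) (g : nat -> nat) : nat :=
  match m with
  | O => O
  | S m' => (nsum m' g + g m')%nat
  end.

From Stdlib Require Import Reals Lra Lia List Classical IndefiniteDescription Wf_nat.
Open Scope R_scope.

(* On [t_i, t_(i+1)] all trajectories are affine, so on a one-sided neighbourhood of
   every point the upper and lower envelopes coincide with single trajectories; hence
   the ideal trajectory is piecewise affine and has an elementary subdivision.
   Near the left end of each elementary piece the top entity T and the bottom entity B
   are fixed, and the ideal has slope (slope T + slope B) / 2 there.  Along the pieces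
   the top slopes are nondecreasing and the bottom slopes nonincreasing, and at every
   breakpoint one of them changes strictly.  Labelling a breakpoint by its new top when
   the top slope rises, and by its new bottom otherwise, is injective: equal labels of
   one kind contradict strict monotonicity, and an entity that is a new top at one
   breakpoint and a new bottom at another would have a slope that is both extremal
   among all entities and not extremal.  So each [t_i, t_(i+1)] has at most n
   breakpoints, that is at most n + 1 elementary intervals. *)

Lemma functional_choice_lt {B : Type} (y0 : B) (m : nat) (P : nat -> B -> Prop) :
  (forall j, (j < m)%nat -> exists y, P j y) ->
  exists f : nat -> B, forall j, (j < m)%nat -> P j (f j).
Proof.
  intros H.
  destruct (functional_choice (fun j y => (j < m)%nat -> P j y)) as [f Hf].
  - intros j. destruct (Compare_dec.lt_dec j m) as [Hj|Hj].
    + destruct (H j Hj) as [y Hy]. exists y. auto.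
    + exists y0. intros; contradiction.
  - exists f. exact Hf.
Qed.

Lemma affine_family_coeffs n (sigma : nat -> R -> R) a b :
  (forall k, (k < n)%nat -> affine_on (sigma k) a b) ->
  exists al be : nat -> R,
    forall k x, (k < n)%nat -> a <= x <= b -> sigma k x = al k * x + be k.
Proof.
  intros Haff.
  destruct (functional_choice_lt (0, 0) n
    (fun k p => forall x, a <= x <= b -> sigma k x = fst p * x + snd p)) as [c Hc].
  - intros k Hk. destruct (Haff k Hk) as [al [be E]]. exists (al, be). exact E.
  - exists (fun k => fst (c k)), (fun k => snd (c k)). intros k x Hk. apply Hc, Hk.
Qed.

Lemma affine_on_sub f a b a' b' :
  affine_on f a b -> a <= a' -> b' <= b -> affine_on f a' b'.
Proof. intros [al [be H]] H1 H2. exists al, be. intros x Hx. apply H; lra. Qed.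

Lemma affine_on_glue f x y z c d d' : x <= y <= z ->
  (forall u, x <= u <= y -> f u = c * u + d) ->
  (forall u, y <= u <= z -> f u = c * u + d') -> affine_on f x z.
Proof.
  intros Hy Hl Hr. assert (d' = d) by (pose proof (Hl y) ; pose proof (Hr y); lra).
  subst d'. exists c, d. intros u Hu. destruct (Rle_dec u y); [apply Hl | apply Hr]; lra.
Qed.

Lemma slope_eq_of_two_points c d c' d' p q : p < q ->
  c * p + d = c' * p + d' -> c * q + d = c' * q + d' -> c = c'.
Proof. intros. nra. Qed.

Lemma slope_le_of_crossing a1 b1 a2 b2 p q : p < q ->
  a2 * p + b2 <= a1 * p + b1 -> a1 * q + b1 <= a2 * q + b2 -> a1 <= a2.
Proof. intros. nra. Qed.

Definition affine_subdivision (f : R -> R) (a b : R) (m : nat) (r : nat -> R) : Prop :=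
  (1 <= m)%nat /\ r 0%nat = a /\ r m = b /\
  (forall j, (j < m)%nat -> r j < r (S j)) /\
  (forall j, (j < m)%nat -> affine_on f (r j) (r (S j))).

Definition piecewise_affine (f : R -> R) (a b : R) : Prop :=
  exists m r, affine_subdivision f a b m r.

Lemma piecewise_affine_single f a b : a < b -> affine_on f a b -> piecewise_affine f a b.
Proof.
  intros Hab Hf. exists 1%nat, (fun j => if (j =? 0)%nat then a else b).
  repeat split; auto; intros j Hj; replace j with 0%nat by lia; simpl; auto.
Qed.

Lemma piecewise_affine_snoc f a b c :
  piecewise_affine f a b -> b < c -> affine_on f b c -> piecewise_affine f a c.
Proof.
  intros [m [r [Hm [H0 [Hmb [Hinc Haff]]]]]] Hbc Hf.
  exists (S m), (fun j => if (j <=? m)%nat then r j else c).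
  repeat split.
  - lia.
  - exact H0.
  - destruct (Nat.leb_spec (S m) m); [lia | reflexivity].
  - intros j Hj. destruct (Nat.leb_spec j m), (Nat.leb_spec (S j) m); try lia.
    + apply Hinc; lia.
    + replace j with m by lia. lra.
  - intros j Hj. destruct (Nat.leb_spec j m), (Nat.leb_spec (S j) m); try lia.
    + apply Haff; lia.
    + replace j with m by lia. rewrite Hmb. exact Hf.
Qed.

(* The supremum of the points up to which [f] is piecewise affine is reached and
   cannot lie below [b]. *)
Lemma piecewise_affine_of_locally_affine f a b : a < b ->
  (forall x, a <= x < b -> exists d, 0 < d /\ x + d <= b /\ affine_on f x (x + d)) ->
  (forall x, a < x <= b -> exists d, 0 < d /\ a <= x - d /\ affine_on f (x - d) x) ->
  piecewise_affine f a b.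
Proof.
  intros Hab Hright Hleft.
  pose (E z := a < z <= b /\ piecewise_affine f a z).
  destruct (Hright a) as [d0 [Hd0 [Hd0b Hf0]]]; [lra|].
  assert (HE0 : E (a + d0)) by (split; [lra | apply piecewise_affine_single; auto; lra]).
  destruct (completeness E) as [c [Hub Hlub]].
  { exists b. intros z [Hz _]. lra. }
  { exists (a + d0). exact HE0. }
  assert (Hac : a < c) by (pose proof (Hub _ HE0); lra).
  assert (Hcb : c <= b) by (apply Hlub; intros z [Hz _]; lra).
  assert (Hc : piecewise_affine f a c).
  { destruct (Hleft c) as [d [Hd [Hdc Hfd]]]; [lra|].
    destruct (classic (exists z, E z /\ c - d < z)) as [[z [[Hz Hfz] Hzd]]|Hno].
    - assert (z <= c) by (apply Hub; split; auto).
      destruct (Req_dec z c) as [<-|Hzc]; [exact Hfz|].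
      apply piecewise_affine_snoc with z; [exact Hfz | lra |].
      apply affine_on_sub with (c - d) c; auto; lra.
    - assert (c <= c - d); [|lra].
      apply Hlub. intros z Hz. apply Rnot_lt_le. intros Hzd. apply Hno. eauto. }
  destruct (Req_dec c b) as [<-|Hcb']; [exact Hc|].
  destruct (Hright c) as [d [Hd [Hdb Hfd]]]; [lra|].
  assert (c + d <= c); [|lra].
  apply Hub. split; [lra|]. apply piecewise_affine_snoc with c; auto; lra.
Qed.

Lemma affine_subdivision_drop f a b m r j :
  affine_subdivision f a b m r -> (1 <= j)%nat -> (j < m)%nat ->
  affine_on f (r (j - 1)%nat) (r (j + 1)%nat) ->
  affine_subdivision f a b (m - 1) (fun i => if (i <? j)%nat then r i else r (S i)).
Proof.
  intros [Hm [H0 [Hmb [Hinc Haff]]]] Hj1 Hjm Hja. repeat split.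
  - lia.
  - destruct (Nat.ltb_spec 0 j); [exact H0 | lia].
  - destruct (Nat.ltb_spec (m - 1) j); [lia|]. replace (S (m - 1)) with m by lia. exact Hmb.
  - intros i Hi. destruct (Nat.ltb_spec i j), (Nat.ltb_spec (S i) j); try lia.
    + apply Hinc; lia.
    + apply Rlt_trans with (r (S i)); apply Hinc; lia.
    + apply Hinc; lia.
  - intros i Hi. destruct (Nat.ltb_spec i j), (Nat.ltb_spec (S i) j); try lia.
    + apply Haff; lia.
    + replace i with (j - 1)%nat by lia. replace (S (S (j - 1))) with (j + 1)%nat by lia.
      exact Hja.
    + apply Haff; lia.
Qed.

Lemma nth_map_seq (r : nat -> R) m j : (j <= m)%nat -> nth j (map r (seq 0 (S m))) 0 = r j.
Proof.
  intros Hj. rewrite nth_indep with (d' := r 0%nat), map_nth, seq_nth; [reflexivity | lia |].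
  rewrite length_map, length_seq. lia.
Qed.

Lemma elementary_partition_of_maximal f a b m r :
  affine_subdivision f a b m r ->
  (forall j, (1 <= j)%nat -> (j < m)%nat -> ~ affine_on f (r (j - 1)%nat) (r (j + 1)%nat)) ->
  elementary_partition f a b (map r (seq 0 (S m))).
Proof.
  intros [Hm [H0 [Hmb [Hinc Haff]]]] Hmax. unfold elementary_partition.
  rewrite length_map, length_seq. repeat split.
  - lia.
  - rewrite nth_map_seq; [exact H0 | lia].
  - replace (S m - 1)%nat with m by lia. rewrite nth_map_seq; [exact Hmb | lia].
  - intros j Hj. rewrite !nth_map_seq by lia. rewrite Nat.add_1_r. apply Hinc; lia.
  - intros j Hj. rewrite !nth_map_seq by lia. rewrite Nat.add_1_r. apply Haff; lia.
  - intros j Hj1 Hj. rewrite !nth_map_seq by lia. apply Hmax; lia.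
Qed.

Lemma elementary_partition_of_piecewise_affine f a b :
  piecewise_affine f a b -> exists s, elementary_partition f a b s.
Proof.
  intros [m [r Hsub]]. revert r Hsub.
  induction m as [m IH] using lt_wf_ind. intros r Hsub.
  destruct (classic (exists j, (1 <= j)%nat /\ (j < m)%nat /\
                       affine_on f (r (j - 1)%nat) (r (j + 1)%nat)))
    as [[j [Hj1 [Hjm Hja]]]|Hmax].
  - exact (IH (m - 1)%nat ltac:(lia) _ (affine_subdivision_drop f a b m r j Hsub Hj1 Hjm Hja)).
  - exists (map r (seq 0 (S m))). apply elementary_partition_of_maximal; [exact Hsub|].
    intros j Hj1 Hjm Hja. apply Hmax. eauto.
Qed.

Lemma affine_subdivision_of_elementary_partition f a b s :
  elementary_partition f a b s ->
  affine_subdivision f a b (length s - 1) (fun j => nth j s 0) /\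
  (forall j, (1 <= j)%nat -> (j < length s - 1)%nat ->
     ~ affine_on f (nth (j - 1) s 0) (nth (j + 1) s 0)).
Proof.
  intros [Hlen [H0 [Hend [Hinc [Haff Hmax]]]]]. repeat split.
  - lia.
  - exact H0.
  - exact Hend.
  - intros j Hj. rewrite <- Nat.add_1_r. apply Hinc. lia.
  - intros j Hj. rewrite <- Nat.add_1_r. apply Haff. lia.
  - intros j Hj1 Hj. apply Hmax; lia.
Qed.

Lemma affine_subdivision_lt f a b m r j k : affine_subdivision f a b m r ->
  (j < k)%nat -> (k <= m)%nat -> r j < r k.
Proof.
  intros [_ [_ [_ [Hinc _]]]] Hjk. induction k as [|k IH]; [lia|]. intros Hk.
  destruct (Nat.eq_dec j k) as [->|Hne]; [apply Hinc; lia|].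
  apply Rlt_trans with (r k); [apply IH; lia | apply Hinc; lia].
Qed.

Lemma affine_subdivision_le f a b m r j k : affine_subdivision f a b m r ->
  (j <= k)%nat -> (k <= m)%nat -> r j <= r k.
Proof.
  intros Hsub Hjk Hk. destruct (Nat.eq_dec j k) as [->|Hne]; [lra|].
  left. apply (affine_subdivision_lt f a b m); auto; lia.
Qed.

Lemma affine_subdivision_range f a b m r j : affine_subdivision f a b m r ->
  (j <= m)%nat -> a <= r j <= b.
Proof.
  intros Hsub Hj. pose proof Hsub as [_ [H0 [Hmb _]]]. rewrite <- H0, <- Hmb.
  split; apply (affine_subdivision_le f a b m); auto; lia.
Qed.
Lemma affine_order_right_le a1 b1 a2 b2 x d : 0 < d -> a2 <= a1 ->
  exists d', 0 < d' <= d /\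
   ((forall y, x <= y <= x + d' -> a2 * y + b2 <= a1 * y + b1) \/
    (forall y, x <= y <= x + d' -> a1 * y + b1 <= a2 * y + b2)).
Proof.
  intros Hd Ha.
  destruct (Rle_dec (a2 * x + b2) (a1 * x + b1)) as [Hx|Hx].
  - exists d. split; [lra|]. left. intros y Hy. nra.
  - set (h := a1 * x + b1 - (a2 * x + b2)). set (c := a1 - a2).
    (* the negative gap [h + c (y - x)] keeps its sign while [(c + 1) (y - x) <= - h] *)
    assert (Hs : 0 < - h / (c + 1)) by (apply Rdiv_lt_0_compat; unfold h, c; lra).
    exists (Rmin d (- h / (c + 1))). split; [split; [apply Rmin_glb_lt; auto | apply Rmin_l]|].
    right. intros y Hy.
    assert (Hyx : y - x <= - h / (c + 1)) by (pose proof (Rmin_r d (- h / (c + 1))); lra).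
    assert (Hc : (c + 1) * (y - x) <= - h).
    { apply Rle_trans with ((c + 1) * (- h / (c + 1))).
      - apply Rmult_le_compat_l; [unfold c; lra | exact Hyx].
      - right. field. unfold c; lra. }
    unfold h, c in *. nra.
Qed.

Lemma affine_order_right a1 b1 a2 b2 x d : 0 < d ->
  exists d', 0 < d' <= d /\
   ((forall y, x <= y <= x + d' -> a2 * y + b2 <= a1 * y + b1) \/
    (forall y, x <= y <= x + d' -> a1 * y + b1 <= a2 * y + b2)).
Proof.
  intros Hd. destruct (Rle_dec a2 a1) as [Ha|Ha].
  - apply affine_order_right_le; auto.
  - destruct (affine_order_right_le a2 b2 a1 b1 x d Hd) as [d' [Hd' [C|C]]]; [lra| |];
      exists d'; auto.
Qed.

Lemma upper_ge n sigma k x : (k < n)%nat -> sigma k x <= upper n sigma x.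
Proof.
  intros Hk. unfold upper. assert (Hin : In k (seq 0 n)) by (apply in_seq; lia).
  induction (seq 0 n) as [|h l IH]; simpl in *; [contradiction|].
  destruct Hin as [->|Hin].
  - apply Rmax_l.
  - eapply Rle_trans; [apply IH, Hin | apply Rmax_r].
Qed.

Lemma lower_opp_upper n sigma x :
  lower n sigma x = - upper n (fun k y => - sigma k y) x.
Proof.
  unfold lower, upper. induction (seq 0 n) as [|h l IH]; simpl.
  - lra.
  - rewrite IH, Ropp_Rmax, !Ropp_involutive. reflexivity.
Qed.

Lemma lower_le n sigma k x : (k < n)%nat -> lower n sigma x <= sigma k x.
Proof.
  intros Hk. rewrite lower_opp_upper.
  pose proof (upper_ge n (fun k y => - sigma k y) k x Hk). lra.
Qed.

Lemma upper_eq_on_right n sigma (al be : nat -> R) x z : (1 <= n)%nat -> x < z ->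
  (forall k y, (k < n)%nat -> x <= y <= z -> sigma k y = al k * y + be k) ->
  exists k d, (k < n)%nat /\ 0 < d /\ x + d <= z /\
    forall y, x <= y <= x + d -> upper n sigma y = sigma k y.
Proof.
  intros Hn Hxz Hsig. unfold upper.
  assert (Hseq : forall k, In k (seq 0 n) -> (k < n)%nat) by (intros k Hk; apply in_seq in Hk; lia).
  induction (seq 0 n) as [|h l IH]; simpl.
  - exists 0%nat, (z - x). repeat split; lia || lra.
  - destruct IH as [k [d [Hk [Hd [Hdz Hy]]]]]; [intros; apply Hseq; simpl; auto|].
    assert (Hh : (h < n)%nat) by (apply Hseq; simpl; auto).
    destruct (affine_order_right (al h) (be h) (al k) (be k) x d Hd) as [d' [Hd' [C|C]]];
      [exists h, d' | exists k, d']; (split; [assumption|]); (split; [lra|]); (split; [lra|]);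
      intros y Hy'; rewrite (Hy y) by lra; rewrite (Hsig h y), (Hsig k y) by (auto; lra).
    + apply Rmax_left, C, Hy'.
    + apply Rmax_right, C, Hy'.
Qed.

Lemma lower_eq_on_right n sigma (al be : nat -> R) x z : (1 <= n)%nat -> x < z ->
  (forall k y, (k < n)%nat -> x <= y <= z -> sigma k y = al k * y + be k) ->
  exists k d, (k < n)%nat /\ 0 < d /\ x + d <= z /\
    forall y, x <= y <= x + d -> lower n sigma y = sigma k y.
Proof.
  intros Hn Hxz Hsig.
  destruct (upper_eq_on_right n (fun k y => - sigma k y) (fun k => - al k) (fun k => - be k) x z)
    as [k [d [Hk [Hd [Hdz Hy]]]]]; auto.
  { intros k y Hk Hy. rewrite Hsig by auto. ring. }
  exists k, d. repeat split; auto. intros y Hy'. rewrite lower_opp_upper, Hy by auto. lra.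
Qed.

Lemma kink_count (n m : nat) (T B : nat -> nat) (al : nat -> R) :
  (forall j, (j < m)%nat -> (T j < n)%nat) ->
  (forall j, (j < m)%nat -> (B j < n)%nat) ->
  (forall j j', (j <= j')%nat -> (j' < m)%nat -> al (T j) <= al (T j')) ->
  (forall j j', (j <= j')%nat -> (j' < m)%nat -> al (B j') <= al (B j)) ->
  (forall j j', (j < m)%nat -> (j' < m)%nat -> T j = B j' ->
     (forall g, (g < n)%nat -> al (T j) <= al g) \/
     (forall g, (g < n)%nat -> al g <= al (T j))) ->
  (forall j, (1 <= j)%nat -> (j < m)%nat ->
     al (T (j - 1)%nat) < al (T j) \/ al (B j) < al (B (j - 1)%nat)) ->
  (m - 1 <= n)%nat.
Proof.
  intros HT HB MT MB Cross Kink.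
  pose (label j := if Rlt_dec (al (T (j - 1)%nat)) (al (T j)) then T j else B j).
  assert (Hmixed : forall j j', (1 <= j)%nat -> (j < m)%nat -> (1 <= j')%nat -> (j' < m)%nat ->
            al (T (j - 1)%nat) < al (T j) -> al (B j') < al (B (j' - 1)%nat) -> T j <> B j').
  { intros j j' Hj1 Hj Hj'1 Hj' Hup Hdn E.
    destruct (Cross j j' Hj Hj' E) as [C|C].
    - pose proof (C (T (j - 1)%nat) (HT (j - 1)%nat ltac:(lia))). lra.
    - pose proof (C (B (j' - 1)%nat) (HB (j' - 1)%nat ltac:(lia))). rewrite E in *. lra. }
  assert (Hdistinct : forall j j', (1 <= j)%nat -> (j < j')%nat -> (j' < m)%nat ->
            label j <> label j').
  { intros j j' Hj1 Hjj' Hj'. unfold label.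
    destruct (Rlt_dec (al (T (j - 1)%nat)) (al (T j))) as [Uj|Uj];
    destruct (Rlt_dec (al (T (j' - 1)%nat)) (al (T j'))) as [Uj'|Uj'].
    - intros E. pose proof (MT j (j' - 1)%nat ltac:(lia) ltac:(lia)). rewrite E in *. lra.
    - destruct (Kink j') as [K|K]; [lia|lia|lra|].
      apply Hmixed; auto; lia.
    - destruct (Kink j) as [K|K]; [lia|lia|lra|].
      intros E. symmetry in E. revert E. apply Hmixed; auto; lia.
    - destruct (Kink j) as [K|K]; [lia|lia|lra|].
      destruct (Kink j') as [K'|K']; [lia|lia|lra|].
      intros E. pose proof (MB j (j' - 1)%nat ltac:(lia) ltac:(lia)). rewrite E in *. lra. }
  assert (Hlen : (length (map label (seq 1 (m - 1))) <= length (seq 0 n))%nat).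
  { apply NoDup_incl_length.
    - apply NoDup_map_NoDup_ForallPairs; [|apply seq_NoDup].
      intros j j' Hj Hj' E. apply in_seq in Hj, Hj'.
      destruct (Nat.lt_total j j') as [Hlt|[Heq|Hlt]]; auto; exfalso.
      + exact (Hdistinct j j' ltac:(lia) Hlt ltac:(lia) E).
      + exact (Hdistinct j' j ltac:(lia) Hlt ltac:(lia) (eq_sym E)).
    - intros k Hk. apply in_map_iff in Hk. destruct Hk as [j [<- Hj]].
      apply in_seq in Hj. apply in_seq. unfold label.
      destruct (Rlt_dec _ _); [pose proof (HT j) | pose proof (HB j)]; lia. }
  rewrite length_map, !length_seq in Hlen. exact Hlen.
Qed.

Section AffineFamily.

Variables (n : nat) (sigma : nat -> R -> R) (al be : nat -> R) (a b : R).
Hypothesis Hn : (1 <= n)%nat.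
Hypothesis Hsig : forall k x, (k < n)%nat -> a <= x <= b -> sigma k x = al k * x + be k.

Lemma envelopes_eq_on_right x z : a <= x -> x < z -> z <= b ->
  exists kU kL d, (kU < n)%nat /\ (kL < n)%nat /\ 0 < d /\ x + d <= z /\
    forall y, x <= y <= x + d ->
      upper n sigma y = sigma kU y /\ lower n sigma y = sigma kL y.
Proof.
  intros Hax Hxz Hzb.
  assert (Hsig' : forall k y, (k < n)%nat -> x <= y <= z -> sigma k y = al k * y + be k)
    by (intros; apply Hsig; auto; lra).
  destruct (upper_eq_on_right n sigma al be x z) as [kU [d1 [HkU [Hd1 [Hz1 HU]]]]]; auto.
  destruct (lower_eq_on_right n sigma al be x z) as [kL [d2 [HkL [Hd2 [Hz2 HL]]]]]; auto.
  pose proof (Rmin_l d1 d2). pose proof (Rmin_r d1 d2).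
  exists kU, kL, (Rmin d1 d2). repeat split; auto.
  - apply Rmin_glb_lt; auto.
  - lra.
  - apply HU; lra.
  - apply HL; lra.
Qed.

Lemma ideal_eq_on_envelopes kU kL y : (kU < n)%nat -> (kL < n)%nat -> a <= y <= b ->
  upper n sigma y = sigma kU y -> lower n sigma y = sigma kL y ->
  ideal n sigma y = (al kU + al kL) / 2 * y + (be kU + be kL) / 2.
Proof.
  intros HkU HkL Hy HU HL. unfold ideal. rewrite HU, HL, !Hsig by auto. field.
Qed.

Lemma ideal_affine_on_right x z : a <= x -> x < z -> z <= b ->
  exists d, 0 < d /\ x + d <= z /\ affine_on (ideal n sigma) x (x + d).
Proof.
  intros Hax Hxz Hzb.
  destruct (envelopes_eq_on_right x z) as [kU [kL [d [HkU [HkL [Hd [Hdz Henv]]]]]]]; auto.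
  exists d. repeat split; auto.
  exists ((al kU + al kL) / 2), ((be kU + be kL) / 2). intros y Hy.
  apply ideal_eq_on_envelopes; try apply Henv; auto; lra.
Qed.

Lemma family_slope_le k g p q : (k < n)%nat -> (g < n)%nat -> a <= p -> p < q -> q <= b ->
  sigma g p <= sigma k p -> sigma k q <= sigma g q -> al k <= al g.
Proof.
  intros Hk Hg Hap Hpq Hqb. rewrite !Hsig by (auto; lra).
  apply slope_le_of_crossing; assumption.
Qed.

Section EnvelopeWindows.

Variables (m : nat) (r : nat -> R) (T B : nat -> nat) (D : nat -> R).
Hypothesis Hsub : affine_subdivision (ideal n sigma) a b m r.
Hypothesis HT : forall j, (j < m)%nat -> (T j < n)%nat.
Hypothesis HB : forall j, (j < m)%nat -> (B j < n)%nat.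
Hypothesis HD : forall j, (j < m)%nat -> 0 < D j /\ r j + D j <= r (S j).
Hypothesis Hwin : forall j y, (j < m)%nat -> r j <= y <= r j + D j ->
  upper n sigma y = sigma (T j) y /\ lower n sigma y = sigma (B j) y.

Lemma window_range j y : (j < m)%nat -> r j <= y <= r j + D j -> a <= y <= b.
Proof.
  intros Hj Hy. pose proof (HD j Hj).
  pose proof (affine_subdivision_range _ _ _ _ _ j Hsub ltac:(lia)).
  pose proof (affine_subdivision_range _ _ _ _ _ (S j) Hsub ltac:(lia)). lra.
Qed.

Lemma top_slope_mono j j' : (j <= j')%nat -> (j' < m)%nat -> al (T j) <= al (T j').
Proof.
  intros Hjj' Hj'. destruct (Nat.eq_dec j j') as [->|Hne]; [lra|].
  assert (Hj : (j < m)%nat) by lia. pose proof (HD j Hj). pose proof (HD j' Hj').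
  pose proof (window_range j (r j) Hj ltac:(lra)).
  pose proof (window_range j' (r j') Hj' ltac:(lra)).
  apply family_slope_le with (r j) (r j'); auto; try lra.
  - apply (affine_subdivision_lt _ _ _ _ _ j j' Hsub); lia.
  - rewrite <- (proj1 (Hwin j (r j) Hj ltac:(lra))). apply upper_ge; auto.
  - rewrite <- (proj1 (Hwin j' (r j') Hj' ltac:(lra))). apply upper_ge; auto.
Qed.

Lemma bottom_slope_antimono j j' : (j <= j')%nat -> (j' < m)%nat -> al (B j') <= al (B j).
Proof.
  intros Hjj' Hj'. destruct (Nat.eq_dec j j') as [->|Hne]; [lra|].
  assert (Hj : (j < m)%nat) by lia. pose proof (HD j Hj). pose proof (HD j' Hj').
  pose proof (window_range j (r j) Hj ltac:(lra)).
  pose proof (window_range j' (r j') Hj' ltac:(lra)).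
  apply family_slope_le with (r j) (r j'); auto; try lra.
  - apply (affine_subdivision_lt _ _ _ _ _ j j' Hsub); lia.
  - rewrite <- (proj2 (Hwin j (r j) Hj ltac:(lra))). apply lower_le; auto.
  - rewrite <- (proj2 (Hwin j' (r j') Hj' ltac:(lra))). apply lower_le; auto.
Qed.

Lemma top_bottom_slope_extremal j j' : (j < m)%nat -> (j' < m)%nat -> T j = B j' ->
  (forall g, (g < n)%nat -> al (T j) <= al g) \/ (forall g, (g < n)%nat -> al g <= al (T j)).
Proof.
  intros Hj Hj' E. pose proof (HD j Hj). pose proof (HD j' Hj').
  pose proof (window_range j (r j) Hj ltac:(lra)).
  pose proof (window_range j' (r j') Hj' ltac:(lra)).
  destruct (Compare_dec.le_lt_dec j j') as [Hle|Hlt].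
  - left. intros g Hg.
    pose proof (affine_subdivision_le _ _ _ _ _ j j' Hsub Hle ltac:(lia)).
    pose proof (window_range j' (r j' + D j') Hj' ltac:(lra)).
    apply family_slope_le with (r j) (r j' + D j'); auto; try lra.
    + rewrite <- (proj1 (Hwin j (r j) Hj ltac:(lra))). apply upper_ge; auto.
    + rewrite E, <- (proj2 (Hwin j' (r j' + D j') Hj' ltac:(lra))). apply lower_le; auto.
  - right. intros g Hg.
    pose proof (affine_subdivision_lt _ _ _ _ _ j' j Hsub Hlt ltac:(lia)).
    apply family_slope_le with (r j') (r j); auto; try lra.
    + rewrite E, <- (proj2 (Hwin j' (r j') Hj' ltac:(lra))). apply lower_le; auto.
    + rewrite <- (proj1 (Hwin j (r j) Hj ltac:(lra))). apply upper_ge; auto.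
Qed.

Lemma ideal_on_window j y : (j < m)%nat -> r j <= y <= r j + D j ->
  ideal n sigma y = (al (T j) + al (B j)) / 2 * y + (be (T j) + be (B j)) / 2.
Proof.
  intros Hj Hy. destruct (Hwin j y Hj Hy) as [HU HL].
  apply ideal_eq_on_envelopes; auto. apply (window_range j); auto.
Qed.

Lemma slope_on_piece j c d : (j < m)%nat ->
  (forall u, r j <= u <= r (S j) -> ideal n sigma u = c * u + d) ->
  c = (al (T j) + al (B j)) / 2.
Proof.
  intros Hj Hf. destruct (HD j Hj) as [HDj HZj].
  apply (slope_eq_of_two_points _ d _ ((be (T j) + be (B j)) / 2) (r j) (r j + D j)); [lra| |];
    rewrite <- Hf by lra; apply ideal_on_window; auto; lra.
Qed.

Hypothesis Hmax : forall j, (1 <= j)%nat -> (j < m)%nat ->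
  ~ affine_on (ideal n sigma) (r (j - 1)%nat) (r (j + 1)%nat).

Lemma kink_changes_slope j : (1 <= j)%nat -> (j < m)%nat ->
  al (T (j - 1)%nat) < al (T j) \/ al (B j) < al (B (j - 1)%nat).
Proof.
  intros Hj1 Hjm.
  pose proof (top_slope_mono (j - 1) j ltac:(lia) Hjm).
  pose proof (bottom_slope_antimono (j - 1) j ltac:(lia) Hjm).
  destruct (Rlt_dec (al (T (j - 1)%nat)) (al (T j))) as [|ET]; [left; assumption|].
  destruct (Rlt_dec (al (B j)) (al (B (j - 1)%nat))) as [|EB]; [right; assumption|].
  exfalso. apply (Hmax j Hj1 Hjm).
  pose proof Hsub as [_ [_ [_ [Hinc Haff]]]].
  assert (HSj : S (j - 1) = j) by lia.
  destruct (Haff (j - 1)%nat ltac:(lia)) as [c1 [d1 P1]]. rewrite HSj in P1.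
  destruct (Haff j Hjm) as [c2 [d2 P2]].
  pose proof (slope_on_piece (j - 1) c1 d1 ltac:(lia) ltac:(rewrite HSj; exact P1)) as C1.
  pose proof (slope_on_piece j c2 d2 Hjm P2) as C2.
  replace c2 with c1 in P2 by lra.
  pose proof (Hinc (j - 1)%nat ltac:(lia)). pose proof (Hinc j Hjm). rewrite HSj in *.
  rewrite Nat.add_1_r. apply (affine_on_glue _ _ (r j) _ c1 d1 d2); auto; lra.
Qed.

Lemma window_count : (m - 1 <= n)%nat.
Proof.
  exact (kink_count n m T B al HT HB top_slope_mono bottom_slope_antimono
           top_bottom_slope_extremal kink_changes_slope).
Qed.

End EnvelopeWindows.

Lemma elementary_partition_pieces_le s :
  elementary_partition (ideal n sigma) a b s -> (num_pieces s <= n + 1)%nat.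
Proof.
  intros Hs. destruct (affine_subdivision_of_elementary_partition _ _ _ _ Hs) as [Hsub Hmax].
  set (m := (length s - 1)%nat) in *. set (r := fun j => nth j s 0) in *.
  destruct (functional_choice_lt (0%nat, 0%nat, 0) m (fun j q =>
      (fst (fst q) < n)%nat /\ (snd (fst q) < n)%nat /\ 0 < snd q /\ r j + snd q <= r (S j) /\
      forall y, r j <= y <= r j + snd q ->
        upper n sigma y = sigma (fst (fst q)) y /\ lower n sigma y = sigma (snd (fst q)) y))
    as [Q HQ].
  { intros j Hj.
    pose proof (affine_subdivision_range _ _ _ _ _ j Hsub ltac:(lia)).
    pose proof (affine_subdivision_range _ _ _ _ _ (S j) Hsub ltac:(lia)).
    pose proof (affine_subdivision_lt _ _ _ _ _ j (S j) Hsub ltac:(lia) ltac:(lia)).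
    destruct (envelopes_eq_on_right (r j) (r (S j))) as [kU [kL [d Hd]]]; try lra.
    exists (kU, kL, d). exact Hd. }
  assert (Hcount : (m - 1 <= n)%nat).
  { apply (window_count m r (fun j => fst (fst (Q j))) (fun j => snd (fst (Q j)))
             (fun j => snd (Q j)) Hsub); [..| exact Hmax];
      intros j; [..| intros y]; intros Hj; destruct (HQ j Hj) as (HkU & HkL & Hd & Hdz & Henv);
      auto. }
  unfold num_pieces. fold m. lia.
Qed.

End AffineFamily.

Lemma ideal_affine_on_left n sigma (al be : nat -> R) a b x w : (1 <= n)%nat ->
  (forall k y, (k < n)%nat -> a <= y <= b -> sigma k y = al k * y + be k) ->
  a <= w -> w < x -> x <= b ->
  exists d, 0 < d /\ w <= x - d /\ affine_on (ideal n sigma) (x - d) x.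
Proof.
  intros Hn Hsig Haw Hwx Hxb.
  (* reflect through the origin and use the right-hand version *)
  destruct (ideal_affine_on_right n (fun k y => sigma k (- y)) (fun k => - al k) be (- b) (- a)
              Hn ltac:(intros k y Hk Hy; cbv beta; rewrite Hsig by (auto; lra); ring) (- x) (- w))
    as [d [Hd [Hdw [c [e Hce]]]]]; try lra.
  exists d. repeat split; auto; [lra|]. exists (- c), e. intros y Hy.
  rewrite <- (Ropp_involutive y) at 1.
  change (ideal n sigma (- - y)) with (ideal n (fun k y => sigma k (- y)) (- y)).
  rewrite Hce by lra. ring.
Qed.

Lemma elementary_partition_exists n sigma (al be : nat -> R) a b : (1 <= n)%nat ->
  (forall k y, (k < n)%nat -> a <= y <= b -> sigma k y = al k * y + be k) -> a < b ->
  exists s, elementary_partition (ideal n sigma) a b s.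
Proof.
  intros Hn Hsig Hab. apply elementary_partition_of_piecewise_affine.
  apply piecewise_affine_of_locally_affine; [exact Hab | |].
  - intros x Hx. apply (ideal_affine_on_right n sigma al be a b); auto; lra.
  - intros x Hx. apply (ideal_affine_on_left n sigma al be a b x a); auto; lra.
Qed.

Lemma nsum_le m g c : (forall i, (i < m)%nat -> (g i <= c)%nat) -> (nsum m g <= m * c)%nat.
Proof.
  induction m as [|m IH]; simpl; intros H; [lia|].
  pose proof (H m ltac:(lia)). pose proof (IH ltac:(intros; apply H; lia)). lia.
Qed.

Theorem mainTheorem1
  (n tau : nat) (t : nat -> R) (sigma : nat -> R -> R)
  (Hn : (1 <= n)%nat)
  (Ht : forall i, (i < tau)%nat -> t i < t (S i))
  (Hpl : forall k i, (k < n)%nat -> (i < tau)%nat ->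
           affine_on (sigma k) (t i) (t (S i))) :
  (forall i, (i < tau)%nat ->
     exists s, elementary_partition (ideal n sigma) (t i) (t (S i)) s) /\
  (forall P : nat -> list R,
     (forall i, (i < tau)%nat ->
        elementary_partition (ideal n sigma) (t i) (t (S i)) (P i)) ->
     (nsum tau (fun i => num_pieces (P i)) <= tau * (n + 2))%nat).
Proof.
  split.
  - intros i Hi.
    destruct (affine_family_coeffs n sigma (t i) (t (S i))) as [al [be Hsig]]; auto.
    apply (elementary_partition_exists n sigma al be); auto.
  - intros P HP. apply nsum_le. intros i Hi.
    destruct (affine_family_coeffs n sigma (t i) (t (S i))) as [al [be Hsig]]; auto.
    pose proof (elementary_partition_pieces_le n sigma al be (t i) (t (S i)) Hn Hsig (P i) (HP i Hi)).
    lia.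
Qed.
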